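(* Let $q$ be a prime power and $L\in\mathbb{F}_q[x]$ a $q$-polynomial of $q$-degree $n\geq2$ such that $L(x)/x$ is irreducible in $\mathbb{F}_q[x]$. Let $E$ be a splitting field of $L$ over $\mathbb{F}_q$ and $V\subseteq E$ the space of roots. For an ordered $\mathbb{F}_q$-basis $v_1,\dots,v_n$ of $V$ let $\epsilon_r:H_{n,r}(\mathbb{F}_q)\to E$, $\epsilon_r(P)=P(v_1,\dots,v_n)$. Then $\epsilon_r$ is not injective for every $r\geq q+1$.
   Context: $H_{n,r}(\mathbb{F}_q)$ is the space of homogeneous polynomials of degree $r$ in $\mathbb{F}_q[x_1,\dots,x_n]$ together with $0$. A $q$-polynomial of $q$-degree $n$ is $\sum_{i=0}^n a_ix^{q^i}$ with $a_n\neq0$. *)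

From HB Require Import structures.
From mathcomp Require Import all_boot all_order all_algebra all_field.
From mathcomp.multinomials Require Import mpoly.
Set Implicit Arguments. Unset Strict Implicit. Unset Printing Implicit Defensive.
Import GRing.Theory.
Local Open Scope ring_scope.

Definition is_qpoly (F : fieldType) (q n : nat) (L : {poly F}) : Prop :=
  exists a : nat -> F, a n != 0 /\ L = \sum_(i < n.+1) a i *: 'X^(q ^ i).

Definition eps_eval (F : fieldType) (E : fieldExtType F) (n : nat)
  (v : 'I_n -> E) (P : {mpoly F[n]}) : E :=
  (map_mpoly (in_alg E) P).@[v].

(* Since V is the root space of a q-polynomial, it is stable under x |-> x^q,
   so each of the n^2 values v_a^q v_b of the degree-(q+1) monomials
   x_a^q x_b lies in the span of the n(n+1)/2 products v_i v_j with i <= j.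
   For n >= 2 these values are linearly dependent, which gives a nonzero
   homogeneous polynomial of degree q+1 in the kernel of the evaluation;
   multiplying it by a power of x_1 moves it to any degree r >= q+1. *)

From HB Require Import structures.
From mathcomp Require Import all_boot all_order all_algebra all_field.
From mathcomp.multinomials Require Import mpoly.
From Stdlib Require Import Classical Lia.
From mathcomp Require Import zify.
Set Implicit Arguments.
Unset Strict Implicit.
Unset Printing Implicit Defensive.

Import GRing.Theory.
Local Open Scope ring_scope.

Lemma card_gt_dim_dependent (K : fieldType) (vT : vectType K) (I : finType)
    (f : I -> vT) (U : {vspace vT}) :
  (forall i, f i \in U) -> (\dim U < #|I|)%N ->
  exists2 c : I -> K, \sum_i c i *: f i = 0 & exists i, c i != 0.
Proof.
move=> fU dimU; pose X := [tuple f (enum_val i) | i < #|I|].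
have notfreeX : ~~ free X.
  apply: contraTN dimU => /eqP freeX; rewrite -leqNgt -[#|I|](size_tuple X) -freeX.
  by apply/dimvS/span_subvP => _ /tnthP[j ->]; rewrite tnth_mktuple.
have [k rel [j kj]] : exists2 k : 'I_#|I| -> K,
    \sum_(i < #|I|) k i *: X`_i = 0 & exists j, k j != 0.
  apply: NNPP => nodep; case/negP: notfreeX; apply/freeP => k rel j.
  by apply/eqP; apply: contraT => kj; case: nodep; exists k => //; exists j.
exists (k \o enum_rank); last by exists (enum_val j); rewrite /= enum_valK.
rewrite (reindex (enum_val : 'I_#|I| -> I)) /=; last exact/onW_bij/enum_val_bij.
rewrite -[RHS]rel; apply: eq_bigr => i _.
by rewrite enum_valK -tnth_nth tnth_mktuple.
Qed.

Section QProducts.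

Variables (F : fieldType) (E : fieldExtType F) (n : nat) (v : 'I_n -> E).

Definition sym_products : seq E :=
  [seq v p.1 * v p.2 | p : 'I_n * 'I_n <- enum {: 'I_n * 'I_n} & (p.1 <= p.2)%N].

Lemma mul_memv_sym_products i j : v i * v j \in <<sym_products>>%VS.
Proof.
apply: memv_span; have [le_ij | /ltnW le_ji] := leqP i j.
  by apply/mapP; exists (i, j); rewrite // mem_filter /= le_ij mem_enum.
by apply/mapP; exists (j, i); rewrite 1?mulrC // mem_filter /= le_ji mem_enum.
Qed.

Lemma dim_sym_products_lt : (1 < n)%N ->
  (\dim <<sym_products>> < #|{: 'I_n * 'I_n}|)%N.
Proof.
move=> lt1n; apply: leq_ltn_trans (dim_span _) _.
rewrite size_map size_filter cardE.
rewrite -(count_predC (fun p : 'I_n * 'I_n => p.1 <= p.2)%N).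
rewrite -addn1 leq_add2l -has_count; apply/hasP.
by exists (Ordinal lt1n, Ordinal (ltnW lt1n)); rewrite ?mem_enum.
Qed.

Lemma qproducts_dependent (q : nat) : (1 < n)%N ->
    (forall i, v i ^+ q \in <<[tuple v i | i < n]>>%VS) ->
  exists2 c : 'I_n * 'I_n -> F,
    \sum_p c p *: (v p.1 ^+ q * v p.2) = 0 & exists p, c p != 0.
Proof.
move=> lt1n vq_span; apply: card_gt_dim_dependent (dim_sym_products_lt lt1n).
move=> [a b] /=; rewrite (coord_span (vq_span a)) mulr_suml.
apply: memv_suml => k _; rewrite -scalerAl (nth_mktuple _ 0).
exact/memvZ/mul_memv_sym_products.
Qed.

End QProducts.

Section FrobeniusOverFiniteField.

Variables (F : finFieldType) (E : fieldExtType F).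

Lemma exprD_card (x y : E) : (x + y) ^+ #|F| = x ^+ #|F| + y ^+ #|F|.
Proof.
have [p pr_p pcharFp] := finPcharP F.
have pcharEp : p \in [pchar E] by rewrite pchar_lalg.
apply: exprDn_pchar; rewrite (card_pprimeChar pcharFp).
by rewrite (eq_pnat _ (pcharf_eq pcharEp)) pnatX pnat_id.
Qed.

Lemma in_alg_expr_card (a : F) : (a%:A : E) ^+ #|F| = a%:A.
Proof. by rewrite -[LHS](rmorphXn (in_alg E)) /= expf_card. Qed.

Lemma horner_qpoly_expr_card (m : nat) (L : {poly F}) (x : E) :
    is_qpoly #|F| m L ->
  (map_poly (in_alg E) L).[x ^+ #|F|] = (map_poly (in_alg E) L).[x] ^+ #|F|.
Proof.
have exprD : {morph (fun y : E => y ^+ #|F|) : y z / y + z} := exprD_card.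
have expr0 : (0 : E) ^+ #|F| = 0 by rewrite expr0n gtn_eqF // ltnW // finNzRing_gt1.
case=> a [_ ->]; rewrite rmorph_sum !horner_sum (big_morph _ exprD expr0).
apply: eq_bigr => i _; rewrite -mul_polyC rmorphM /= map_polyC map_polyXn.
by rewrite !hornerE exprMn in_alg_expr_card -!exprM mulnC.
Qed.

Lemma root_qpoly_expr_card (m : nat) (L : {poly F}) (x : E) :
    is_qpoly #|F| m L -> root (map_poly (in_alg E) L) x ->
  root (map_poly (in_alg E) L) (x ^+ #|F|).
Proof.
move=> qL /eqP Lx; apply/eqP.
by rewrite (horner_qpoly_expr_card x qL) Lx expr0n gtn_eqF // ltnW // finNzRing_gt1.
Qed.

End FrobeniusOverFiniteField.

Section QProductMonomials.

Variable n : nat.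

Definition mnm_qprod (q : nat) (p : 'I_n * 'I_n) : 'X_{1..n} :=
  (U_(p.1) *+ q + U_(p.2))%MM.

Lemma mdeg_mnm_qprod q p : mdeg (mnm_qprod q p) = q.+1.
Proof. by rewrite mdegD mdegMn !mdeg1 mul1n addn1. Qed.

Lemma mnm_qprod_inj q : (1 < q)%N -> injective (mnm_qprod q).
Proof.
move=> lt1q [a b] [c d] /= eq_m.
have coord i : ((a == i) * q + (b == i) = (c == i) * q + (d == i))%N.
  by have := congr1 (fun m : 'X_{1..n} => m i) eq_m; rewrite !mnmDE !mulmnE !mnm1E.
have ac : a = c.
  apply/eqP; rewrite eq_sym; have := coord a; rewrite eqxx.
  by case: (c == a) (b == a) (d == a) => [] [] []; lia.
by subst c; have := coord b; rewrite eqxx => /addnI; case: eqP => // ->.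
Qed.

Lemma mcoeff_sumX_inj (R : nzRingType) (I : finType) (m : I -> 'X_{1..n})
    (c : I -> R) j :
  injective m -> (\sum_i c i *: 'X_[m i])@_(m j) = c j.
Proof.
move=> m_inj; rewrite raddf_sum (bigD1 j) //= mcoeffZ mcoeffX eqxx mulr1.
rewrite big1 ?addr0 // => i ij; rewrite mcoeffZ mcoeffX inj_eq //.
by rewrite (negPf ij) mulr0.
Qed.

End QProductMonomials.

Section EvaluationKernel.

Variables (F : fieldType) (E : fieldExtType F) (n : nat) (v : 'I_n -> E).

Lemma eps_eval0 : eps_eval v 0 = 0.
Proof. by rewrite /eps_eval raddf0 meval0. Qed.

Lemma eps_evalD (p1 p2 : {mpoly F[n]}) :
  eps_eval v (p1 + p2) = eps_eval v p1 + eps_eval v p2.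
Proof. by rewrite /eps_eval raddfD /= mevalD. Qed.

Lemma eps_evalZ (c : F) (p : {mpoly F[n]}) : eps_eval v (c *: p) = c *: eps_eval v p.
Proof. by rewrite /eps_eval map_mpolyZ mevalZ mulr_algl. Qed.

Lemma eps_evalM (p1 p2 : {mpoly F[n]}) :
  eps_eval v (p1 * p2) = eps_eval v p1 * eps_eval v p2.
Proof. by rewrite /eps_eval rmorphM /= mevalM. Qed.

Lemma eps_eval_sumZ (I : finType) (c : I -> F) (P : I -> {mpoly F[n]}) :
  eps_eval v (\sum_i c i *: P i) = \sum_i c i *: eps_eval v (P i).
Proof.
rewrite (big_morph _ eps_evalD eps_eval0).
by apply: eq_bigr => i _; rewrite eps_evalZ.
Qed.

Lemma eps_eval_qprod q p : eps_eval v 'X_[mnm_qprod q p] = v p.1 ^+ q * v p.2.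
Proof.
rewrite mpolyXD -mpolyXn eps_evalM /eps_eval rmorphXn /= rmorphXn /=.
by rewrite !map_mpolyX !mevalXU.
Qed.

Lemma eps_eval_kernel_qprod q : (1 < n)%N -> (1 < q)%N ->
    (forall i, v i ^+ q \in <<[tuple v i | i < n]>>%VS) ->
  exists P : {mpoly F[n]}, [/\ P != 0, P \is q.+1.-homog & eps_eval v P = 0].
Proof.
move=> lt1n lt1q vq_span.
have [c rel [p cp]] := qproducts_dependent lt1n vq_span.
exists (\sum_p c p *: 'X_[mnm_qprod q p]); split.
- apply: contraNneq cp => /(congr1 (mcoeff (mnm_qprod q p))).
  by rewrite mcoeff_sumX_inj ?mcoeff0 => [->|]; last exact: mnm_qprod_inj.
- by apply: rpred_sum => p' _; rewrite rpredZ // dhomogX; apply/eqP/mdeg_mnm_qprod.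
- by rewrite eps_eval_sumZ -[RHS]rel; apply: eq_bigr => p' _; rewrite eps_eval_qprod.
Qed.

Lemma eps_eval_kernel_raise d r (P : {mpoly F[n]}) : (0 < n)%N -> (d <= r)%N ->
    P != 0 -> P \is d.-homog -> eps_eval v P = 0 ->
  exists Q : {mpoly F[n]}, [/\ Q != 0, Q \is r.-homog & eps_eval v Q = 0].
Proof.
move=> n_gt0 le_dr P_nz P_homog P_ker; pose m := (U_(Ordinal n_gt0) *+ (r - d))%MM.
exists (P * 'X_[m]); split.
- apply: contraNneq P_nz => PX0; apply/eqP/mpolyP => k.
  by rewrite -(mcoeffMX P m) PX0 !mcoeff0.
- rewrite -(subnKC le_dr); apply: dhomogM P_homog _.
  have deg_m : mdeg m = (r - d)%N by rewrite mdegMn mdeg1 mul1n.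
  by rewrite dhomogX; apply/eqP.
- by rewrite eps_evalM P_ker mul0r.
Qed.

Lemma eps_eval_homog_not_inj q r : (1 < n)%N -> (1 < q)%N -> (q < r)%N ->
    (forall i, v i ^+ q \in <<[tuple v i | i < n]>>%VS) ->
  ~ (forall P1 P2 : {mpoly F[n]}, P1 \is r.-homog -> P2 \is r.-homog ->
       eps_eval v P1 = eps_eval v P2 -> P1 = P2).
Proof.
move=> lt1n lt1q lt_qr vq_span eps_inj.
have [P [P_nz P_homog P_ker]] := eps_eval_kernel_qprod lt1n lt1q vq_span.
have [Q [Q_nz Q_homog Q_ker]] := eps_eval_kernel_raise (ltnW lt1n) lt_qr P_nz P_homog P_ker.
move/eqP: Q_nz; apply; apply: (eps_inj Q 0 Q_homog (rpred0 _)).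
by rewrite Q_ker eps_eval0.
Qed.

End EvaluationKernel.

Theorem theorem7p5 (F : finFieldType) (q : nat) (hq : #|F| = q)
  (n : nat) (hn : (2 <= n)%N) (L : {poly F})
  (hL : is_qpoly q n L) (hirr : irreducible_poly (L %/ 'X))
  (E : fieldExtType F)
  (hsplit : splittingFieldFor 1%VS (map_poly (in_alg E) L) fullv)
  (v : 'I_n -> E)
  (hroot : forall i, root (map_poly (in_alg E) L) (v i))
  (hfree : free [tuple v i | i < n])
  (hspan : forall x : E, root (map_poly (in_alg E) L) x ->
             x \in <<[tuple v i | i < n]>>%VS)
  (r : nat) (hr : (q.+1 <= r)%N) :
  ~ (forall P1 P2 : {mpoly F[n]}, P1 \is r.-homog -> P2 \is r.-homog ->
       eps_eval v P1 = eps_eval v P2 -> P1 = P2).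
Proof.
subst q; apply: eps_eval_homog_not_inj hn (finNzRing_gt1 F) hr _ => i.
exact/hspan/(root_qpoly_expr_card hL)/hroot.
Qed.
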